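(* Assume all the hypotheses of the following statement: $U=\mathcal Y$; $w:\mathcal Y\to\mathbb R$ is continuous and bounded; (H1) $\mathcal Y$ is reflexive; (H2) there exists $M:\mathcal Y\times\mathcal Y\to[0,\infty]$ such that $y_1\mapsto M(y_1,y_2)$ is Fréchet differentiable at every $y_1\neq y_2$, $y_2\mapsto M(y_1,y_2)$ is Fréchet differentiable at every $y_2\neq y_1$, and there are $\lambda\in(0,1]$, $\Lambda\in[1,\infty)$ with $\lambda\|y_1-y_2\|\le M(y_1,y_2)\le\Lambda\|y_1-y_2\|$ for all $y_1,y_2$ and $\lambda\le\|\nabla M(\cdot,y_2)(y_1)\|_{\mathcal Y^*}$, $\|\nabla M(y_1,\cdot)(y_2)\|_{\mathcal Y^*}\le\Lambda$ whenever defined; $D_df_x(u)$ exists for all $x\in X$, $u\in\mathcal Y$ and unit $d$, and there is $C_0>0$ with $\inf_{x\in S(u)}D_df_x(u)>-C_0$ for all $u\in\mathcal Y$ and unit $d$; and for every unit $d$, $w$ is a viscosity subsolution in $\mathcal Y$ of $-\langle\nabla w(u),d\rangle+\inf_{x\in S(u)}D_df_x(u)=0$. Then $w$ is (globally) Lipschitz on $\mathcal Y$.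
   Context: Let $\mathfrak X,\mathcal Y$ be real Banach spaces, $X\subset\mathfrak X$ nonempty, $f:X\times\mathcal Y\to\mathbb R$ continuous, $\Phi:\mathcal Y\to2^X$ a set-valued map, $v(u)=\inf_{x\in\Phi(u)}f(x,u)$, $S(u)=\{x\in\Phi(u):f(x,u)=v(u)\}$, $f_x(u):=f(x,u)$, and $D_df_x(u)=\lim_{s\downarrow0}\frac{f(x,u+sd)-f(x,u)}{s}$. Unit vectors have norm $1$; $\inf\emptyset=+\infty$. $\mathcal J^+w(u_0)=\{p\in\mathcal Y^*:\limsup_{u\to u_0}\frac{w(u)-w(u_0)-\langle p,u-u_0\rangle}{\|u-u_0\|}\le0\}$. For fixed unit $d$, an upper semicontinuous $w$ is a viscosity subsolution of $-\langle\nabla w(u),d\rangle+\inf_{x\in S(u)}D_df_x(u)=0$ at $u_0$ if $-\langle\eta,d\rangle+\inf_{x\in S(u_0)}D_df_x(u_0)\le0$ for all $\eta\in\mathcal J^+w(u_0)$; ''in a set'' means at every point. *)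

From HB Require Import structures.
From mathcomp Require Import all_boot all_order all_algebra.
From mathcomp Require Import all_classical all_reals all_analysis.
Set Implicit Arguments. Unset Strict Implicit. Unset Printing Implicit Defensive.
Import Order.TTheory GRing.Theory Num.Theory.
Import numFieldNormedType.Exports.
Local Open Scope classical_set_scope.
Local Open Scope ring_scope.

Section Defs.
Variable R : realType.

Definition in_dual (Y : normedModType R) (p : Y -> R) : Prop :=
  (forall (a : R) (x y : Y), p (a *: x + y) = a * p x + p y) /\ continuous p.

Definition dual_norm (Y : normedModType R) (p : Y -> R) : \bar R :=
  ereal_sup [set (`|p y|)%:E | y in [set y : Y | `|y| <= 1]].

(* reflexivity: the canonical embedding Y -> Y^** is onto, i.e. every
   bounded linear functional Phi on Y^* is evaluation at some y *)
Definition reflexive_space (Y : normedModType R) : Prop :=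
  forall Phi : (Y -> R) -> R,
    (forall (a : R) (p q : Y -> R), in_dual p -> in_dual q ->
        Phi (fun y => a * p y + q y) = a * Phi p + Phi q) ->
    (exists C : R, forall p, in_dual p ->
        ((`|Phi p|)%:E <= C%:E * dual_norm p)%E) ->
    exists y : Y, forall p, in_dual p -> Phi p = p y.

(* value function v(u) = inf_{x in Phi(u)} f(x,u)  (inf of empty set = +oo) *)
Definition valfun (XX Y : Type) (f : XX -> Y -> R) (Phi : Y -> set XX)
  (u : Y) : \bar R :=
  ereal_inf [set (f x u)%:E | x in Phi u].

Definition solset (XX Y : Type) (f : XX -> Y -> R) (Phi : Y -> set XX)
  (u : Y) : set XX :=
  [set x | Phi u x /\ (f x u)%:E = valfun f Phi u].

Definition ddiff (XX : Type) (Y : normedModType R) (f : XX -> Y -> R)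
  (x : XX) (u d : Y) : R :=
  lim ((fun s : R => (f x (u + s *: d) - f x u) / s) @ 0^'+).

Definition ddiff_exists (XX : Type) (Y : normedModType R) (f : XX -> Y -> R)
  (x : XX) (u d : Y) : Prop :=
  cvg ((fun s : R => (f x (u + s *: d) - f x u) / s) @ 0^'+).

(* Frechet superdifferential J^+ w(u0): limsup_{u -> u0} (...)/||u - u0|| <= 0,
   written out *)
Definition superjet (Y : normedModType R) (w : Y -> R) (u0 : Y)
  : set (Y -> R) :=
  [set p | in_dual p /\
     forall e : R, 0 < e -> \forall u \near u0^',
       (w u - w u0 - p (u - u0)) / `|u - u0| <= e].

Definition infD (XX : Type) (Y : normedModType R) (f : XX -> Y -> R)
  (Phi : Y -> set XX) (u d : Y) : \bar R :=
  ereal_inf [set (ddiff f x u d)%:E | x in solset f Phi u].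

Definition visc_subsol_at (XX : Type) (Y : normedModType R) (f : XX -> Y -> R)
  (Phi : Y -> set XX) (d : Y) (w : Y -> R) (u0 : Y) : Prop :=
  (forall (u : Y) (e : R), 0 < e -> \forall v \near u, w v < w u + e) /\
  forall eta, superjet w u0 eta ->
    ((- eta d)%:E + infD f Phi u0 d <= 0)%E.
End Defs.

From HB Require Import structures.
From mathcomp Require Import all_boot all_order all_algebra.
From mathcomp Require Import all_classical all_reals all_analysis.
From mathcomp Require Import ring lra.
Import Order.TTheory GRing.Theory Num.Theory.
Import numFieldNormedType.Exports.
Local Open Scope classical_set_scope.
Local Open Scope ring_scope.

(* Under (H4)-(H5), every Frechet superjet eta of w at any point satisfies
   eta d > -C0 for all unit d (viscosity_superjet_lower).  Suppose
   w b - w a > K Lam |b - a| with K = 4 C0 / lam, where M is the gauge of (H2),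
   and put F = w - K M(., a), so that F b > F a.  A smooth variational principle
   of Borwein-Preiss type, penalising with the squares M(., v)^2 (which, unlike
   M, are differentiable everywhere), gives a point y with F y >= F b, hence
   y <> a, at which F has a superjet S of norm <= C0 / 2.  Then
   S + K 'd M(., a)(y) is a superjet of w at y; as 'd M(., a)(y) has dual norm
   >= lam, in some unit direction d it is < C0/2 - 2 C0 < -C0, a contradiction.
   Hence w is (4 C0 Lam / lam)-Lipschitz. *)

Lemma near_maximizer {R : realType} {T : Type} {g : T -> R} {B : R} :
  (forall x, g x <= B) -> forall (z : T) (e : R), 0 < e ->
  exists x, g z <= g x /\ forall u, g u <= g x + e.
Proof.
move=> gB z e e0.
have hs : has_sup (range g) by split; [exists (g z), z | exists B => _ [x _ <-]].
have [_ [x0 _ <-] hx0] := sup_adherent e0 hs.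
have ub u : g u <= sup (range g) by apply: sup_upper_bound => //; exists u.
have [zx|xz] := leP (g z) (g x0).
  by exists x0; split => // u; have := ub u; lra.
by exists z; split => // u; have := ub u; lra.
Qed.

Lemma geometric_half_series_le {R : realType} (C : R) n : 0 <= C ->
  \sum_(0 <= i < n) C * 2^-1 ^+ i <= 2 * C.
Proof.
move=> C0; have := geometric_seriesE C (_ : (2^-1 : R) != 1).
move=> /(_ _)/(congr1 (fun s => s n)) /=; rewrite /series /= => ->; last lra.
have : 0 <= (2^-1 : R) ^+ n by apply: exprn_ge0; lra.
have -> : C * (1 - 2^-1 ^+ n) / (1 - 2^-1) = 2 * C - 2 * C * 2^-1 ^+ n by field.
nra.
Qed.

Lemma dominated_series_le {R : realType} {t : R ^nat} {C : R} :
  (forall i, `|t i| <= C * 2^-1 ^+ i) -> forall n, `|series t n| <= 2 * C.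
Proof.
move=> tC n; have C0 : 0 <= C.
  by have := tC 0%N; rewrite expr0 mulr1; apply: le_trans.
rewrite /series /=; apply: le_trans (ler_norm_sum _ _ _) _.
by apply: le_trans (geometric_half_series_le C n C0); apply: ler_sum.
Qed.

Lemma dominated_series_cvg {R : realType} {t : R ^nat} {C : R} :
  (forall i, `|t i| <= C * 2^-1 ^+ i) -> cvgn (series t).
Proof.
move=> tC; apply: normed_cvg => /=.
have C0 : 0 <= C by have := tC 0%N; rewrite expr0 mulr1; apply: le_trans.
apply: (@series_le_cvg _ _ (geometric C 2^-1)) => [n|n|n|] /=.
- exact: normr_ge0.
- by apply: mulr_ge0 => //; apply: exprn_ge0; lra.
- exact: tC.
- by apply: is_cvg_geometric_series; rewrite ger0_norm; lra.
Qed.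

Lemma diff_remainder {R : realType} {V W : normedModType R} {f : V -> W} {x : V} :
  differentiable f x -> forall e : R, 0 < e ->
  \forall u \near x, `|f u - f x - 'd f x (u - x)| <= e * `|u - x|.
Proof.
move=> df e e0; have E := diff_locallyx df.
set o := (X in forall h, _ = _ + _ + X h) in E.
rewrite (near_shift 0 x) subr0; apply: filterS (littleoP o e0) => h /=.
by rewrite addrK E (addrAC _ (o h)) (addrC (f x)) addrK addrAC subrr add0r.
Qed.

Section DualNorm.
Context {R : realType} {Y : normedModType R} (p : {linear Y -> R}).

Let pZ k x : p (k *: x) = k * p x. Proof. by rewrite linearZ. Qed.

Lemma dual_norm_le (C : R) : (dual_norm p <= C%:E)%E ->
  forall h, `|p h| <= C * `|h|.
Proof.
move=> hC h; have [->|h0] := eqVneq h 0; first by rewrite linear0 !normr0 mulr0.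
have nh : 0 < `|h| by rewrite normr_gt0.
have : ((`|p (`|h|^-1 *: h)|)%:E <= C%:E)%E.
  apply: le_trans hC; apply: ereal_sup_ubound; exists (`|h|^-1 *: h) => //=.
  by rewrite normrZ normrV ?unitfE ?gt_eqF// normr_id mulVf ?gt_eqF.
rewrite lee_fin pZ normrM normrV ?unitfE ?gt_eqF// normr_id.
by rewrite ler_pdivrMl // mulrC.
Qed.

Lemma dual_norm_ge_unit_dir (C : R) : 0 < C -> (C%:E <= dual_norm p)%E ->
  exists d, `|d| = 1 /\ p d < - (C / 2).
Proof.
move=> C0 hC.
have [z [z1 pz]] : exists z, `|z| <= 1 /\ C / 2 < `|p z|.
  apply/not_existsP => hn; suff : (dual_norm p <= (C / 2)%:E)%E.
    by move=> /(le_trans hC); rewrite lee_fin; lra.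
  apply: ge_ereal_sup => _ [z /= z1 <-]; rewrite lee_fin.
  by rewrite leNgt; apply/negP => pz; apply: (hn z).
have nz : 0 < `|z|.
  by rewrite normr_gt0; apply: contraTneq pz => ->; rewrite linear0 normr0; lra.
have unit k : `|k| = `|z|^-1 -> `|k *: z| = 1.
  by move=> nk; rewrite normrZ nk mulVf ?gt_eqF.
have zinv : 1 <= `|z|^-1 by rewrite invf_ge1.
have [pz0|pz0] := lerP 0 (p z).
- exists (- `|z|^-1 *: z); split; first by apply: unit; rewrite normrN ger0_norm // invr_ge0.
  rewrite pZ ger0_norm // in pz *; have := ler_wpM2r pz0 zinv; nra.
- exists (`|z|^-1 *: z); split; first by apply: unit; rewrite ger0_norm // invr_ge0.
  rewrite pZ ltr0_norm // in pz *; have npz : 0 <= - p z by lra.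
  have := ler_wpM2r npz zinv; nra.
Qed.

End DualNorm.

(* A gauge in the sense of hypothesis (H2), restricted to what is used:
   M(., v) is comparable to the distance to v and is differentiable away from
   v, with derivative of dual norm between lam and Lam. *)
Set Implicit Arguments.
Record gauge {R : realType} {Y : normedModType R} (M : Y -> Y -> R)
    (lam Lam : R) : Prop := Gauge {
  gauge_ge0 : forall x v, 0 <= M x v;
  gauge_diff : forall x v, x != v -> differentiable (fun y => M y v) x;
  gauge_lam_gt0 : 0 < lam;
  gauge_Lam_ge1 : 1 <= Lam;
  gauge_equiv : forall x v, lam * `|x - v| <= M x v <= Lam * `|x - v|;
  gauge_dnorm : forall x v, x != v ->
    (lam%:E <= dual_norm ('d (fun y => M y v) x : Y -> R))%E /\
    (dual_norm ('d (fun y => M y v) x : Y -> R) <= Lam%:E)%E }.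
Unset Implicit Arguments.

Section Gauge.
Context {R : realType} {Y : normedModType R} {M : Y -> Y -> R} {lam Lam : R}.
Hypothesis gM : gauge M lam Lam.

Let M_ge0 := gauge_ge0 gM.

Lemma gauge_Lam_gt0 : 0 < Lam.
Proof. exact: lt_le_trans ltr01 (gauge_Lam_ge1 gM). Qed.

Let Lam_gt0 := gauge_Lam_gt0.

Lemma gauge_le x v : M x v <= Lam * `|x - v|.
Proof. by case/andP: (gauge_equiv gM x v). Qed.

Lemma gauge_ge x v : lam * `|x - v| <= M x v.
Proof. by case/andP: (gauge_equiv gM x v). Qed.

Lemma gauge_diag x : M x x = 0.
Proof.
by apply/eqP; rewrite eq_le M_ge0 andbT; have := gauge_le x x; rewrite subrr normr0 mulr0.
Qed.

Lemma gauge_dM_le x v : x != v ->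
  forall h, `|'d (fun y => M y v) x h| <= Lam * `|h|.
Proof. by move=> xv; apply: dual_norm_le; case: (gauge_dnorm gM x v xv). Qed.

Lemma gauge_segment_derive x v (h : Y) t : x + t *: h != v ->
  is_derive t 1 (fun s : R => M (x + s *: h) v)
    ('d (fun y => M y v) (x + t *: h) h).
Proof.
move=> xv.
have gd : is_diff t (cst x + *:%R^~ h : R -> Y) (0 + *:%R^~ h) by apply: is_diffD.
have Mdi : is_diff (x + t *: h) (fun y => M y v) ('d (fun y => M y v) (x + t *: h)).
  exact: differentiableP (gauge_diff gM _ _ xv).
have cd := @is_diff_comp _ _ _ _ _ _ _ _ t gd Mdi.
have -> : (fun s : R => M (x + s *: h) v) =
    (fun y => M y v) \o (cst x + *:%R^~ h : R -> Y) by apply: funext => s.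
apply: is_derive_eq; first exact/derivableP/diff_derivable.
by rewrite deriveE // diff_val /= add0r scale1r.
Qed.

(* M(., v) is Lam-Lipschitz: on a segment avoiding v by the mean value
   theorem, and on a segment through v because both values are then small. *)
Lemma gauge_lipschitz u x v : `|M u v - M x v| <= Lam * `|u - x|.
Proof.
have [[t [/andP[t0 t1] vt]]|nseg] :=
  pselect (exists t : R, 0 <= t <= 1 /\ v = x + t *: (u - x)).
  have hu : M u v <= Lam * `|u - x|.
    apply: le_trans (gauge_le u v) _; rewrite ler_pM2l //.
    have -> : u - v = (1 - t) *: (u - x) by rewrite vt scalerBl scale1r opprD addrA.
    rewrite normrZ ger0_norm ?subr_ge0 // ler_piMl //; lra.
  have hx : M x v <= Lam * `|u - x|.
    apply: le_trans (gauge_le x v) _; rewrite ler_pM2l //.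
    by rewrite vt opprD addrA subrr add0r normrN normrZ ger0_norm // ler_piMl.
  by have := M_ge0 u v; have := M_ge0 x v; rewrite ler_norml; lra.
have nv t : 0 <= t <= 1 -> x + t *: (u - x) != v.
  by move=> t01; apply/eqP => e; apply: nseg; exists t.
have cont : {within `[0, 1], continuous (fun s : R => M (x + s *: (u - x)) v)}.
  apply: derivable_within_continuous => t t01.
  by case: (@gauge_segment_derive x v (u - x) t (nv t _)); rewrite // -in_itv.
have [c c01] := MVT (@ltr01 R)
  (fun t t01 => gauge_segment_derive x v (u - x) t (nv t (subset_itv_oo_cc t01))) cont.
have ux : x + (u - x) = u by rewrite addrC subrK.
rewrite scale1r scale0r addr0 subr0 mulr1 ux => ->.
by apply: gauge_dM_le; apply/nv/subset_itv_oo_cc.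
Qed.

Lemma gauge_continuous v : continuous (fun x => M x v).
Proof.
move=> x; apply/cvgrPdist_le => e e0.
have /cvgrPdist_le/(_ (e / Lam)) := @cvg_id _ (nbhs x).
rewrite divr_gt0 // => /(_ isT); apply: filterS => z hz.
by apply: le_trans (gauge_lipschitz _ _ _) _; rewrite -ler_pdivlMl // mulrC.
Qed.

(* The squared gauge M(., v)^2 is differentiable everywhere, including at v;
   we record its gradient at y and the first-order remainder at u. *)
Definition sqgauge_grad y v h := 2 * M y v * 'd (fun x => M x v) y h.
Definition sqgauge_rem y v u :=
  M u v ^+ 2 - M y v ^+ 2 - sqgauge_grad y v (u - y).

Lemma sqgauge_grad_le y v h : `|sqgauge_grad y v h| <= 2 * Lam * M y v * `|h|.
Proof.
have [<-|yv] := eqVneq y v.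
  by rewrite /sqgauge_grad gauge_diag !(mulr0, mul0r) normr0.
rewrite /sqgauge_grad normrM ger0_norm ?mulr_ge0 //.
have -> : 2 * Lam * M y v * `|h| = 2 * M y v * (Lam * `|h|) by ring.
by apply: ler_wpM2l; [rewrite mulr_ge0 | exact: gauge_dM_le].
Qed.

(* Crude bound on the remainder, uniform in v: used for the far-away v. *)
Lemma sqgauge_rem_le y v u xi : `|u - y| <= xi -> `|y - v| <= xi ->
  sqgauge_rem y v u <= 5 * Lam ^+ 2 * xi * `|u - y|.
Proof.
rewrite /sqgauge_rem; set h := `|u - y|; set mu := M u v; set my := M y v.
move=> hu hv.
have hl : `|mu - my| <= Lam * h by apply: gauge_lipschitz.
have hmy : my <= Lam * `|y - v| by apply: gauge_le.
have hr := sqgauge_grad_le y v (u - y); rewrite -/h -/my in hr.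
have mu0 : 0 <= mu := M_ge0 u v.
have my0 : 0 <= my := M_ge0 y v.
have h0 : 0 <= h := normr_ge0 _.
have hmu : mu <= my + Lam * h by move: hl; rewrite ler_norml; lra.
have e1 : mu ^+ 2 - my ^+ 2 <= Lam * h * (mu + my).
  have -> : mu ^+ 2 - my ^+ 2 = (mu - my) * (mu + my) by ring.
  apply: le_trans (ler_norm _) _; rewrite normrM (ger0_norm (addr_ge0 mu0 my0)).
  by rewrite ler_wpM2r // addr_ge0.
have e2 : - sqgauge_grad y v (u - y) <= 2 * Lam * my * h.
  by apply: le_trans hr; rewrite -normrN ler_norm.
have L0 := Lam_gt0.
have : Lam * h * (mu + my) + 2 * Lam * my * h <=
    Lam * h * (Lam * h + 4 * (Lam * `|y - v|)).
  have -> : Lam * h * (mu + my) + 2 * Lam * my * h = Lam * h * (mu + 3 * my) by ring.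
  apply: ler_wpM2l; first exact: mulr_ge0 (ltW L0) h0.
  lra.
have : Lam * h * (Lam * h + 4 * (Lam * `|y - v|)) <= 5 * Lam ^+ 2 * xi * h.
  have -> : Lam * h * (Lam * h + 4 * (Lam * `|y - v|)) =
      Lam ^+ 2 * h * (h + 4 * `|y - v|) by ring.
  have -> : 5 * Lam ^+ 2 * xi * h = Lam ^+ 2 * h * (5 * xi) by ring.
  apply: ler_wpM2l; first by rewrite mulr_ge0 // exprn_ge0 // ltW.
  lra.
lra.
Qed.

Lemma near_ball (x : Y) (r : R) : 0 < r -> \forall u \near x, `|u - x| <= r.
Proof.
move=> r0; have /cvgrPdist_le/(_ r r0) := @cvg_id _ (nbhs x).
by apply: filterS => u; rewrite distrC.
Qed.

(* The remainder of M(., v)^2 at y is o(|u - y|): for v = y because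
   M(u, y)^2 <= Lam^2 |u - y|^2, and otherwise by differentiability of M(., v). *)
Lemma sqgauge_rem_near y v th : 0 < th ->
  \forall u \near y, sqgauge_rem y v u <= th * `|u - y|.
Proof.
move=> th0; have L2 : 0 < Lam ^+ 2 by apply: exprn_gt0.
set my := M y v.
have dterm : \forall u \near y,
    2 * my * (M u v - my - 'd (fun x => M x v) y (u - y)) <= th / 2 * `|u - y|.
  have [yv|yv] := eqVneq y v.
    apply: nearW => u; rewrite /my yv gauge_diag mulr0 mul0r.
    by apply: mulr_ge0; [lra | apply: normr_ge0].
  have my0 : 0 <= my := M_ge0 y v.
  have m1 : 0 < 4 * (my + 1) by lra.
  have q0 : 0 < th / (4 * (my + 1)) by apply: divr_gt0.
  apply: filterS (diff_remainder (gauge_diff gM _ _ yv) _ q0) => u hu.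
  have hq : 2 * my * (th / (4 * (my + 1))) <= th / 2.
    by rewrite mulrA ler_pdivrMr //; nra.
  apply: le_trans (_ : 2 * my * (th / (4 * (my + 1)) * `|u - y|) <= _).
    by apply: ler_wpM2l; [rewrite mulr_ge0 | apply: le_trans (ler_norm _) hu].
  by rewrite mulrA; apply: ler_wpM2r.
have r0 : 0 < th / (2 * Lam ^+ 2) by rewrite divr_gt0 // mulr_gt0.
apply: filterS2 dterm (near_ball y _ r0) => u hd hu.
have -> : sqgauge_rem y v u =
    (M u v - my) ^+ 2 + 2 * my * (M u v - my - 'd (fun x => M x v) y (u - y)).
  by rewrite /sqgauge_rem /sqgauge_grad -/my; ring.
suff : (M u v - my) ^+ 2 <= th / 2 * `|u - y| by lra.
apply: le_trans (_ : (Lam * `|u - y|) ^+ 2 <= _).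
  by have := gauge_lipschitz u y v; rewrite -/my ler_norml => /andP[? ?]; nra.
have -> : (Lam * `|u - y|) ^+ 2 = Lam ^+ 2 * `|u - y| * `|u - y| by ring.
have -> : th / 2 * `|u - y| = Lam ^+ 2 * `|u - y| * (th / (2 * Lam ^+ 2)).
  by field; rewrite gt_eqF.
by apply: ler_wpM2l => //; rewrite mulr_ge0 // ltW.
Qed.

End Gauge.
Arguments sqgauge_grad {R Y} M y v h.
Arguments sqgauge_rem {R Y} M y v u.

Section SmoothVariationalPrinciple.
Context {R : realType} {Y : completeNormedModType R} {M : Y -> Y -> R} {lam Lam : R}.
Hypothesis gM : gauge M lam Lam.
Variables (F : Y -> R) (B : R) (b : Y) (delta : R).
Hypotheses (F_cont : continuous F) (F_le : forall x, F x <= B) (delta_gt0 : 0 < delta).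

Let M_ge0 := gauge_ge0 gM.
Let lam_gt0 := gauge_lam_gt0 gM.
Let Lam_gt0 := gauge_Lam_gt0 gM.

(* Parameters of the construction: the penalty M(., v_i)^2 carries weight
   c 2^-i, the i-th near-maximisation has tolerance tol i, and gam is the
   radius ensuring that the final superjet has norm at most delta. *)
Definition bp_gam := delta / (8 * Lam ^+ 2).
Definition bp_slack := B - F b + 1.
Definition bp_c := Num.min (lam * bp_gam) (lam ^+ 2 * bp_gam ^+ 2 / bp_slack).
Definition bp_weight i := bp_c * 2^-1 ^+ i.
Definition bp_tau n : R := n.+1%:R^-1.
Definition bp_tol n := bp_weight n.+1 * bp_tau n ^+ 2.

Lemma bp_gam_gt0 : 0 < bp_gam.
Proof. by rewrite divr_gt0 // mulr_gt0 // exprn_gt0. Qed.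

Lemma bp_slack_gt0 : 0 < bp_slack.
Proof. by rewrite /bp_slack; have := F_le b; lra. Qed.

Lemma bp_c_gt0 : 0 < bp_c.
Proof.
rewrite /bp_c lt_min mulr_gt0 ?bp_gam_gt0 //= divr_gt0 ?bp_slack_gt0 //.
by rewrite mulr_gt0 // exprn_gt0 // bp_gam_gt0.
Qed.

Lemma bp_weight_gt0 i : 0 < bp_weight i.
Proof. by rewrite mulr_gt0 ?bp_c_gt0 // exprn_gt0 //; lra. Qed.

Lemma bp_weight_sum n : \sum_(0 <= i < n) bp_weight i <= 2 * bp_c.
Proof. exact/(geometric_half_series_le _ n)/ltW/bp_c_gt0. Qed.

Lemma bp_tau_gt0 n : 0 < bp_tau n.
Proof. by rewrite invr_gt0 ltr0n. Qed.

Lemma bp_tau_le1 n : bp_tau n <= 1.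
Proof. by rewrite invf_le1 ?ler1n // ltr0n. Qed.

Lemma bp_tau_antitone {n m : nat} : (n <= m)%N -> bp_tau m <= bp_tau n.
Proof. by move=> nm; rewrite lef_pV2 ?posrE ?ltr0n // ler_nat. Qed.

Lemma bp_tau_small r : 0 < r -> exists N, bp_tau N < r.
Proof.
move=> r0; exists (Num.Def.archi_bound r^-1).
have := @archi_boundP _ r^-1 (ltW _); rewrite invr_gt0 r0 => /(_ isT) hb.
rewrite /bp_tau -[X in _ < X]invrK ltf_pV2 ?posrE ?ltr0n ?invr_gt0 //.
by apply: lt_le_trans hb _; rewrite ler_nat.
Qed.

Lemma bp_tol_gt0 n : 0 < bp_tol n.
Proof. by rewrite mulr_gt0 ?bp_weight_gt0 // exprn_gt0 // bp_tau_gt0. Qed.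

Lemma bp_tol_le n : bp_tol n <= bp_c * bp_tau n.
Proof.
have t0 := bp_tau_gt0 n; have w0 := bp_weight_gt0 n.+1.
have wc : bp_weight n.+1 <= bp_c.
  rewrite -[leRHS]mulr1 ler_wpM2l ?(ltW bp_c_gt0) // exprn_ile1 //; lra.
have wt : bp_weight n.+1 * bp_tau n <= bp_c by have := bp_tau_le1 n; nra.
by rewrite /bp_tol expr2 mulrA; apply: ler_wpM2r => //; exact: ltW.
Qed.

Definition bp_penalized (s : nat -> Y) n x :=
  F x - \sum_(0 <= i < n.+1) bp_weight i * M x (s i) ^+ 2.

Lemma bp_penalized_le s n x : bp_penalized s n x <= B.
Proof.
rewrite /bp_penalized; have := F_le x.
suff : 0 <= \sum_(0 <= i < n.+1) bp_weight i * M x (s i) ^+ 2 by lra.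
by apply: sumr_ge0 => i _; rewrite mulr_ge0 ?sqr_ge0 // ltW // bp_weight_gt0.
Qed.

Definition bp_next (s : nat -> Y) n : Y :=
  proj1_sig (cid (near_maximizer (@bp_penalized_le s n) (s n) _ (bp_tol_gt0 n))).

Lemma bp_nextP s n : bp_penalized s n (s n) <= bp_penalized s n (bp_next s n) /\
  forall u, bp_penalized s n u <= bp_penalized s n (bp_next s n) + bp_tol n.
Proof.
exact: proj2_sig (cid (near_maximizer (@bp_penalized_le s n) (s n) _ (bp_tol_gt0 n))).
Qed.

(* bp_history n lists the first n + 1 points v_0 = b, ..., v_n of the
   sequence; v_n = bp_pt n. *)
Fixpoint bp_history n : nat -> Y :=
  if n is m.+1 then
    fun i => if (i <= m)%N then bp_history m i else bp_next (bp_history m) m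
  else fun _ => b.

Definition bp_pt n := bp_history n n.

Lemma bp_pt0 : bp_pt 0 = b. Proof. by []. Qed.

Lemma bp_historyE n i : (i <= n)%N -> bp_history n i = bp_pt i.
Proof.
elim: n i => [|n IH] i; first by rewrite leqn0 => /eqP ->.
rewrite leq_eqVlt => /orP[/eqP -> //|]; rewrite ltnS => lin /=.
by rewrite lin; exact: IH.
Qed.

Definition bp_obj n := bp_penalized bp_pt n.

Lemma bp_penalized_history n : bp_penalized (bp_history n) n = bp_obj n.
Proof.
apply: funext => x; rewrite /bp_obj /bp_penalized; congr (_ - _).
by apply: eq_big_nat => i /andP[_ ilt]; rewrite bp_historyE // -ltnS.
Qed.

Lemma bp_obj_step n : bp_obj n (bp_pt n) <= bp_obj n (bp_pt n.+1) /\
  forall u, bp_obj n u <= bp_obj n (bp_pt n.+1) + bp_tol n.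
Proof.
have -> : bp_pt n.+1 = bp_next (bp_history n) n by rewrite /bp_pt /= ltnn.
by have := bp_nextP (bp_history n) n; rewrite bp_penalized_history.
Qed.

Lemma bp_obj0E x : bp_obj 0 x = F x - bp_c * M x b ^+ 2.
Proof. by rewrite /bp_obj /bp_penalized big_nat1 /bp_weight expr0 mulr1. Qed.

Lemma bp_objS n x :
  bp_obj n.+1 x = bp_obj n x - bp_weight n.+1 * M x (bp_pt n.+1) ^+ 2.
Proof. by rewrite /bp_obj /bp_penalized big_nat_recr //= opprD addrA. Qed.

Lemma bp_obj_antitone n k x : bp_obj (n + k) x <= bp_obj n x.
Proof.
elim: k => [|k IH]; first by rewrite addn0.
apply: le_trans IH; rewrite addnS bp_objS gerBl.
by rewrite mulr_ge0 ?sqr_ge0 // ltW // bp_weight_gt0.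
Qed.

(* The new penalty vanishes at the new point. *)
Lemma bp_obj_new n : bp_obj n.+1 (bp_pt n.+1) = bp_obj n (bp_pt n.+1).
Proof. by rewrite bp_objS (gauge_diag gM) expr0n /= mulr0 subr0. Qed.

Lemma bp_obj_pt_later n k : bp_obj n (bp_pt n) <= bp_obj n (bp_pt (n + k)).
Proof.
apply: le_trans (bp_obj_antitone n k _).
elim: k => [|k IH]; first by rewrite addn0.
by apply: le_trans IH _; rewrite addnS bp_obj_new; exact: (bp_obj_step _).1.
Qed.

(* Later points stay close to v_(n+1): the penalty at v_(n+1) cannot exceed
   the tolerance of step n. *)
Lemma bp_pt_dist n k : `|bp_pt (n.+1 + k) - bp_pt n.+1| <= bp_tau n / lam.
Proof.
set m := (n.+1 + k)%N.
have h1 := (bp_obj_step n).2 (bp_pt m).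
have h2 := bp_obj_pt_later n.+1 k; rewrite bp_obj_new -/m bp_objS in h2.
have : bp_weight n.+1 * M (bp_pt m) (bp_pt n.+1) ^+ 2 <=
    bp_weight n.+1 * bp_tau n ^+ 2 by rewrite -/(bp_tol n); lra.
rewrite ler_pM2l ?bp_weight_gt0 // => hsq.
have hM : M (bp_pt m) (bp_pt n.+1) <= bp_tau n.
  by rewrite -(ler_pXn2r (_ : 0 < 2)%N) ?nnegrE ?M_ge0 // ltW ?bp_tau_gt0.
rewrite ler_pdivlMr // mulrC; apply: le_trans hM.
exact: gauge_ge gM (bp_pt m) (bp_pt n.+1).
Qed.

Lemma bp_pt_cvg : cvgn bp_pt.
Proof.
apply: cauchy_cvg; apply: cauchy_exP => eps eps0.
have [N hN] := bp_tau_small _ (mulr_gt0 lam_gt0 eps0).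
exists (bp_pt N.+1); exists N.+1 => // m /= Nm.
rewrite -ball_normE /ball_ /= -normrN opprB -(subnKC Nm).
by apply: le_lt_trans (bp_pt_dist _ _) _; rewrite ltr_pdivrMr // mulrC.
Qed.

Definition bp_limit := limn bp_pt.

Lemma bp_pt_to_limit : bp_pt @ \oo --> bp_limit.
Proof. exact: bp_pt_cvg. Qed.

Lemma bp_limit_dist n : `|bp_limit - bp_pt n.+1| <= bp_tau n / lam.
Proof.
apply/ler_addgt0Pr => d d0.
have /cvgrPdist_lt/(_ d d0) [N _ hN] := bp_pt_to_limit.
have := hN (n.+1 + N)%N (leq_addl _ _); have := bp_pt_dist n N.
have := ler_normD (bp_limit - bp_pt (n.+1 + N)%N) (bp_pt (n.+1 + N)%N - bp_pt n.+1).
by rewrite addrA subrK /=; lra.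
Qed.

Lemma bp_obj_cont n : continuous (bp_obj n).
Proof.
have pen v k : continuous (fun x => k * M x v ^+ 2).
  move=> x; have -> : (fun x => k * M x v ^+ 2) =
      cst k \* ((fun x => M x v) \* (fun x => M x v)).
    by apply: funext => z; rewrite /= expr2.
  by apply: continuousM; [exact: cvg_cst | apply: continuousM; exact: gauge_continuous gM v x].
elim: n => [|n IH] x.
  have -> : bp_obj 0 = F - (fun x => bp_c * M x b ^+ 2).
    by apply: funext => z; rewrite bp_obj0E.
  by apply: continuousB; [exact: F_cont | exact: pen].
have -> : bp_obj n.+1 = bp_obj n - (fun x => bp_weight n.+1 * M x (bp_pt n.+1) ^+ 2).
  by apply: funext => z; rewrite bp_objS.
by apply: continuousB; [exact: IH | exact: pen].
Qed.

Lemma bp_obj_pt_le_limit n : bp_obj n (bp_pt n) <= bp_obj n bp_limit.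
Proof.
have cv : (bp_obj n \o bp_pt) @ \oo --> bp_obj n bp_limit :=
  cvg_comp _ _ bp_pt_to_limit (bp_obj_cont n bp_limit).
have <- : lim ((bp_obj n \o bp_pt) @ \oo) = bp_obj n bp_limit by apply: cvg_lim.
apply: limr_ge; first exact: cvgP cv.
near=> m; have nm : (n <= m)%N by near: m; exact: nbhs_infty_ge.
by rewrite /= -(subnKC nm); exact: bp_obj_pt_later.
Unshelve. all: by end_near. Qed.

Lemma bp_obj_near_max n u : bp_obj n.+1 u <= bp_obj n.+1 bp_limit + bp_tol n.
Proof.
have := bp_obj_antitone n 1 u; rewrite addn1 => /le_trans; apply.
apply: le_trans ((bp_obj_step n).2 u) _.
by rewrite -bp_obj_new lerD2r bp_obj_pt_le_limit.
Qed.

Lemma bp_obj0_limit : F b + bp_c * M bp_limit b ^+ 2 <= F bp_limit.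
Proof.
have := bp_obj_pt_le_limit 0; rewrite !bp_obj0E bp_pt0 (gauge_diag gM).
by rewrite expr0n /= mulr0 subr0; lra.
Qed.

Lemma bp_F_b_le : F b <= F bp_limit.
Proof.
have := bp_obj0_limit; have : 0 <= bp_c * M bp_limit b ^+ 2.
  by rewrite mulr_ge0 ?sqr_ge0 // ltW // bp_c_gt0.
lra.
Qed.

Lemma bp_c_dist : bp_c * `|bp_limit - b| <= bp_gam.
Proof.
set y := bp_limit; have c0 := bp_c_gt0; have g0 := bp_gam_gt0.
have hslack : bp_c * (lam * `|y - b|) ^+ 2 <= bp_slack.
  have l0 : 0 <= lam * `|y - b| by rewrite mulr_ge0 // ltW.
  have hM : (lam * `|y - b|) ^+ 2 <= M y b ^+ 2.
    by have := gauge_ge gM y b; nra.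
  have := bp_obj0_limit; have := F_le y; rewrite /bp_slack -/y.
  by have := ler_wpM2l (ltW c0) hM; lra.
have hcl : bp_c * bp_slack <= lam ^+ 2 * bp_gam ^+ 2.
  by rewrite -ler_pdivlMr ?bp_slack_gt0 // /bp_c ge_min lexx orbT.
have hsq : (bp_c * `|y - b|) ^+ 2 <= bp_gam ^+ 2.
  rewrite -(@ler_pM2r _ (lam ^+ 2)) ?exprn_gt0 //.
  have -> : (bp_c * `|y - b|) ^+ 2 * lam ^+ 2 =
      bp_c * (bp_c * (lam * `|y - b|) ^+ 2) by ring.
  rewrite [X in _ <= X]mulrC; apply: le_trans _ hcl.
  by apply: ler_wpM2l; [exact: ltW | exact: hslack].
have : 0 <= bp_c * `|y - b| by rewrite mulr_ge0 // ltW.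
nra.
Qed.


(* The candidate superjet at the limit point: the gradient there of the total
   penalty sum_i c 2^-i M(., v_i)^2, as the limit of its partial sums. *)
Definition bp_grad i h := sqgauge_grad M bp_limit (bp_pt i) h.
Definition bp_partial n h := series (fun i => bp_weight i * bp_grad i h) n.
Definition bp_form h := limn (bp_partial^~ h).
Definition bp_beta := bp_c * `|bp_limit - b| + bp_c / lam.

Lemma bp_beta_ge0 : 0 <= bp_beta.
Proof.
have c0 := ltW bp_c_gt0.
by rewrite addr_ge0 ?divr_ge0 ?mulr_ge0 // ltW.
Qed.

Lemma bp_weight_dist i :
  bp_weight i * `|bp_limit - bp_pt i| <= bp_beta * 2^-1 ^+ i.
Proof.
have h2 : 0 <= (2^-1 : R) ^+ i by apply: exprn_ge0; lra.
have c0 := bp_c_gt0; have cb : 0 <= bp_c * `|bp_limit - b| by rewrite mulr_ge0 // ltW.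
case: i h2 => [|n] h2.
  rewrite /bp_weight /bp_beta !expr0 !mulr1 bp_pt0.
  have : 0 <= bp_c / lam by rewrite divr_ge0 // ltW.
  lra.
have hd : bp_c * `|bp_limit - bp_pt n.+1| <= bp_c / lam.
  rewrite ler_pM2l //; apply: le_trans (bp_limit_dist n) _.
  by rewrite -[leRHS]mul1r ler_pM2r ?invr_gt0 // bp_tau_le1.
by rewrite /bp_weight /bp_beta; nra.
Qed.

Lemma bp_term_le h i :
  `|bp_weight i * bp_grad i h| <= 2 * Lam ^+ 2 * bp_beta * `|h| * 2^-1 ^+ i.
Proof.
have w0 := ltW (bp_weight_gt0 i); have h0 := normr_ge0 h.
have hL : 0 <= 2 * Lam ^+ 2 * `|h| := mulr_ge0 (mulr_ge0 (ler0n _ 2) (sqr_ge0 Lam)) h0.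
rewrite normrM (ger0_norm w0).
apply: le_trans (_ : bp_weight i * (2 * Lam ^+ 2 * `|bp_limit - bp_pt i| * `|h|) <= _).
  apply: ler_wpM2l => //; apply: le_trans (sqgauge_grad_le gM _ _ _) _.
  have -> : 2 * Lam ^+ 2 * `|bp_limit - bp_pt i| * `|h| =
      2 * Lam * (Lam * `|bp_limit - bp_pt i|) * `|h| by ring.
  apply: ler_wpM2r => //; apply: ler_wpM2l; first by rewrite mulr_ge0 // ltW.
  exact: gauge_le gM _ _.
have -> : bp_weight i * (2 * Lam ^+ 2 * `|bp_limit - bp_pt i| * `|h|) =
    bp_weight i * `|bp_limit - bp_pt i| * (2 * Lam ^+ 2 * `|h|) by ring.
have -> : 2 * Lam ^+ 2 * bp_beta * `|h| * 2^-1 ^+ i =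
    bp_beta * 2^-1 ^+ i * (2 * Lam ^+ 2 * `|h|) by ring.
by apply: ler_wpM2r => //; exact: bp_weight_dist.
Qed.

Lemma bp_partial_to_form h : bp_partial^~ h @ \oo --> bp_form h.
Proof. exact: dominated_series_cvg (bp_term_le h). Qed.

Lemma bp_partial_le n h : `|bp_partial n h| <= 4 * Lam ^+ 2 * bp_beta * `|h|.
Proof.
have -> : 4 * Lam ^+ 2 * bp_beta * `|h| = 2 * (2 * Lam ^+ 2 * bp_beta * `|h|).
  by ring.
exact: dominated_series_le (bp_term_le h) n.
Qed.

Lemma bp_form_le h : `|bp_form h| <= 4 * Lam ^+ 2 * bp_beta * `|h|.
Proof.
rewrite /bp_form -lim_norm; last exact: cvgP (bp_partial_to_form h).
apply: limr_le; first by apply: is_cvg_norm; exact: cvgP (bp_partial_to_form h).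
exact: nearW (bp_partial_le^~ h).
Qed.

Lemma bp_partial_linear n k h1 h2 :
  bp_partial n (k *: h1 + h2) = k * bp_partial n h1 + bp_partial n h2.
Proof.
rewrite /bp_partial /series /= mulr_sumr -big_split /=; apply: eq_bigr => i _.
have dlin : 'd (fun x => M x (bp_pt i)) bp_limit (k *: h1 + h2) =
    k * 'd (fun x => M x (bp_pt i)) bp_limit h1 +
    'd (fun x => M x (bp_pt i)) bp_limit h2 by rewrite linearP.
by rewrite /bp_grad /sqgauge_grad dlin; ring.
Qed.

Lemma bp_form_linear k h1 h2 : bp_form (k *: h1 + h2) = k * bp_form h1 + bp_form h2.
Proof.
rewrite /bp_form.
have -> : bp_partial^~ (k *: h1 + h2) = k *: bp_partial^~ h1 + bp_partial^~ h2.
  by apply: funext => n; rewrite bp_partial_linear.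
rewrite limD; last 2 first.
- by apply: is_cvgZl_tmp; exact: cvgP (bp_partial_to_form h1).
- exact: cvgP (bp_partial_to_form h2).
by rewrite limZl_tmp //; exact: cvgP (bp_partial_to_form h1).
Qed.

Lemma bp_form_continuous : continuous bp_form.
Proof.
have sub x z : bp_form x - bp_form z = bp_form (x - z).
  by rewrite -[x - z]addrC -scaleN1r bp_form_linear mulN1r addrC.
set s := 4 * Lam ^+ 2 * bp_beta + 1.
have s0 : 0 < s.
  have : 0 <= 4 * Lam ^+ 2 by rewrite mulr_ge0 ?sqr_ge0.
  by have := bp_beta_ge0; rewrite /s; nra.
move=> x; apply/cvgrPdist_le => e e0.
have /cvgrPdist_le/(_ (e / s)) := @cvg_id _ (nbhs x).
rewrite divr_gt0 // => /(_ isT); apply: filterS => z hz.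
rewrite sub; apply: le_trans (bp_form_le _) _.
apply: le_trans (_ : s * `|x - z| <= _); last by rewrite -ler_pdivlMl // mulrC.
by apply: ler_wpM2r => //; rewrite /s lerDl.
Qed.

Lemma bp_form_dual : in_dual bp_form.
Proof. by split; [exact: bp_form_linear | exact: bp_form_continuous]. Qed.

(* Since c |y - b| <= gam and c / lam <= gam, the form has norm <= delta. *)
Lemma bp_form_bound h : `|bp_form h| <= delta * `|h|.
Proof.
apply: le_trans (bp_form_le h) _; apply: ler_wpM2r => //.
have hb : bp_beta <= 2 * bp_gam.
  have : bp_c / lam <= bp_gam by rewrite ler_pdivrMr // mulrC /bp_c ge_min lexx.
  by have := bp_c_dist; rewrite /bp_beta; lra.
have -> : delta = 4 * Lam ^+ 2 * (2 * bp_gam).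
  by rewrite /bp_gam; field; exact: lt0r_neq0.
by apply: ler_wpM2l => //; rewrite mulr_ge0 ?sqr_ge0.
Qed.

(* First-order remainders of the penalties at the limit point, uniformly
   small in i: finitely many by differentiability, the tail because the
   limit is close to v_i for large i. *)
Definition bp_rem i u := sqgauge_rem M bp_limit (bp_pt i) u.

Lemma bp_rem_uniform th : 0 < th ->
  \forall u \near bp_limit, forall i, bp_rem i u <= th * `|u - bp_limit|.
Proof.
move=> th0; set xi := th / (5 * Lam ^+ 2).
have xi0 : 0 < xi by rewrite divr_gt0 // mulr_gt0 // exprn_gt0.
have [N hN] := bp_tau_small _ (mulr_gt0 xi0 lam_gt0).
have head : \forall u \near bp_limit,
    forall j : 'I_N.+1, bp_rem j u <= th * `|u - bp_limit|.
  by apply: filter_forall => j; exact: sqgauge_rem_near gM _ _ _ th0.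
apply: filterS2 head (near_ball bp_limit _ xi0) => u hhead hu i.
have [iN|Ni] := leqP i N; first exact: (hhead (Ordinal (iN : (i < N.+1)%N))).
have -> : th = 5 * Lam ^+ 2 * xi by rewrite /xi; field; exact: lt0r_neq0.
apply: (sqgauge_rem_le gM) => //; case: i Ni => // j Nj.
apply: le_trans (bp_limit_dist j) _; rewrite ler_pdivrMr //.
by apply: le_trans (bp_tau_antitone _) (ltW hN); rewrite -ltnS.
Qed.

(* Near-maximality of the limit for the (n+1)-th objective, rewritten as a
   bound on the excess of F over its linearisation by the form. *)
Lemma bp_excess_le n u :
  F u - F bp_limit - bp_form (u - bp_limit) <=
  \sum_(0 <= i < n.+2) bp_weight i * bp_rem i u
  + (bp_partial n.+2 (u - bp_limit) - bp_form (u - bp_limit)) + bp_tol n.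
Proof.
have := bp_obj_near_max n u; rewrite /bp_obj /bp_penalized.
have -> : bp_partial n.+2 (u - bp_limit) =
    \sum_(0 <= i < n.+2) bp_weight i * M u (bp_pt i) ^+ 2
    - \sum_(0 <= i < n.+2) bp_weight i * M bp_limit (bp_pt i) ^+ 2
    - \sum_(0 <= i < n.+2) bp_weight i * bp_rem i u.
  rewrite /bp_partial /series /= -!sumrB; apply: eq_bigr => i _.
  by rewrite /bp_rem /sqgauge_rem /bp_grad; ring.
lra.
Qed.

Lemma bp_form_superjet eps : 0 < eps -> \forall u \near bp_limit,
  F u - F bp_limit - bp_form (u - bp_limit) <= eps * `|u - bp_limit|.
Proof.
move=> eps0; have c0 := bp_c_gt0.
have th0 : 0 < eps / (2 * bp_c) by rewrite divr_gt0 // mulr_gt0.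
apply: filterS (bp_rem_uniform _ th0) => u hrem.
apply/ler_addgt0Pr => d d0; have d20 : 0 < d / 2 by rewrite divr_gt0.
have [N1 hN1] := bp_tau_small _ (divr_gt0 d20 c0).
have /cvgrPdist_lt/(_ _ d20) [N2 _ hN2] := bp_partial_to_form (u - bp_limit).
set n := maxn N1 N2.
have hpart : bp_partial n.+2 (u - bp_limit) - bp_form (u - bp_limit) <= d / 2.
  apply: le_trans (ltW (hN2 _ (leqW (leqW (leq_maxr N1 N2))))).
  by rewrite -normrN opprB ler_norm.
have htol : bp_tol n <= d / 2.
  apply: le_trans (bp_tol_le n) _; rewrite mulrC -ler_pdivlMr //.
  exact: le_trans (bp_tau_antitone (leq_maxl _ _)) (ltW hN1).
have hsum : \sum_(0 <= i < n.+2) bp_weight i * bp_rem i u <= eps * `|u - bp_limit|.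
  apply: le_trans (_ : \sum_(0 <= i < n.+2)
      bp_weight i * (eps / (2 * bp_c) * `|u - bp_limit|) <= _).
    by apply: ler_sum => i _; apply: ler_wpM2l; [exact/ltW/bp_weight_gt0 | exact: hrem].
  rewrite -mulr_suml; apply: le_trans (ler_wpM2r _ (bp_weight_sum n.+2)) _.
    by rewrite mulr_ge0 // ltW.
  have -> : 2 * bp_c * (eps / (2 * bp_c) * `|u - bp_limit|) = eps * `|u - bp_limit|.
    by field; rewrite gt_eqF.
  by [].
by have := bp_excess_le n u; lra.
Qed.

Theorem smooth_variational_principle : exists (y : Y) (S : Y -> R),
  [/\ F b <= F y, in_dual S, forall h, `|S h| <= delta * `|h| &
    forall eps, 0 < eps ->
      \forall u \near y, F u - F y - S (u - y) <= eps * `|u - y|].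
Proof.
exists bp_limit, bp_form; split.
- exact: bp_F_b_le.
- exact: bp_form_dual.
- exact: bp_form_bound.
- exact: bp_form_superjet.
Qed.

End SmoothVariationalPrinciple.

Lemma superjet_add_diff {R : realType} {Y : normedModType R} (F g S : Y -> R)
    (y : Y) : in_dual S ->
  (forall eps, 0 < eps ->
     \forall u \near y, F u - F y - S (u - y) <= eps * `|u - y|) ->
  differentiable g y -> superjet (F \+ g) y (S \+ 'd g y).
Proof.
move=> [S_lin S_cont] F_sj dg; split; first split.
- move=> a x z.
  have dlin : 'd g y (a *: x + z) = a * 'd g y x + 'd g y z by rewrite linearP.
  by rewrite /= S_lin dlin; ring.
- by move=> x; apply: continuousD; [exact: S_cont | exact: diff_continuous].
move=> eps eps0; have e2 : 0 < eps / 2 by rewrite divr_gt0.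
have est : \forall u \near y,
    (F \+ g) u - (F \+ g) y - (S \+ 'd g y) (u - y) <= eps * `|u - y|.
  apply: filterS2 (F_sj _ e2) (diff_remainder dg _ e2) => u hF hg /=.
  have := ler_norm (g u - g y - 'd g y (u - y)).
  have : eps / 2 * `|u - y| + eps / 2 * `|u - y| = eps * `|u - y| by field.
  lra.
apply: filterS2 (nbhs_dnbhs est) (nbhs_dnbhs_neq y) => u hu uy.
by rewrite ler_pdivrMr // normr_gt0 subr_eq0.
Qed.

Lemma viscosity_superjet_lower {R : realType} {XX : Type} {Y : normedModType R}
    {f : XX -> Y -> R} {Phi : Y -> set XX} {w : Y -> R} {C0 : R} :
  (forall u d, `|d| = 1 -> ((- C0)%:E < infD f Phi u d)%E) ->
  (forall d, `|d| = 1 -> forall u0, visc_subsol_at f Phi d w u0) ->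
  forall y eta, superjet w y eta -> forall d, `|d| = 1 -> - C0 < eta d.
Proof.
move=> hinf hvisc y eta sj d d1.
have := (hvisc d d1 y).2 eta sj; have := hinf y d d1.
by case: (infD f Phi y d) => [r| |] //=; rewrite lte_fin lee_fin; lra.
Qed.

(* Otherwise the smooth
   variational principle applied to F = w - K M(., a) produces a superjet of w
   at some y <> a which is < -C0 in a unit direction. *)
Lemma lipschitz_of_superjet_bound {R : realType} {Y : completeNormedModType R}
    {M : Y -> Y -> R} {lam Lam : R} (gM : gauge M lam Lam) {w : Y -> R} {B C0 : R} :
  continuous w -> (forall u, `|w u| <= B) -> 0 < C0 ->
  (forall y eta, superjet w y eta -> forall d, `|d| = 1 -> - C0 < eta d) ->
  forall a b, w b - w a <= 4 * C0 / lam * Lam * `|b - a|.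
Proof.
move=> w_cont w_le C0_gt0 w_sj a b; rewrite leNgt; apply/negP => gap.
have lam0 := gauge_lam_gt0 gM.
have K0 : 0 < 4 * C0 / lam by rewrite divr_gt0 // mulr_gt0.
set K := 4 * C0 / lam in gap K0.
pose f x := M x a; pose F x := w x - K * M x a.
have F_cont : continuous F.
  have -> : F = w - (cst K \* f) by apply: funext.
  move=> x; apply: continuousB; first exact: w_cont.
  by apply: continuousM; [exact: cvg_cst | exact: gauge_continuous gM a x].
have F_le x : F x <= B.
  have := ler_norm (w x); have := w_le x.
  by have := mulr_ge0 (ltW K0) (gauge_ge0 gM x a); rewrite /F; lra.
have C02 : 0 < C0 / 2 by rewrite divr_gt0.
have [y [S [Fby S_dual S_le S_sj]]] :=
  smooth_variational_principle gM F B b (C0 / 2) F_cont F_le C02.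
have ya : y != a.
  apply: contraTneq gap => ya; rewrite -leNgt.
  move: Fby; rewrite ya /F (gauge_diag gM) mulr0 subr0.
  by have := gauge_le gM b a; nra.
have fa := gauge_diff gM y a ya.
have sj : superjet w y (S \+ 'd (K *: f) y).
  have -> : w = F \+ K *: f by apply: funext => x; rewrite /F /= subrK.
  exact: superjet_add_diff _ _ _ _ S_dual S_sj (differentiableZ K fa).
have [d [d1 dneg]] := dual_norm_ge_unit_dir ('d f y) _ lam0 (gauge_dnorm gM y a ya).1.
have := w_sj _ _ sj d d1; rewrite /= (diffZ K fa) /= -/f.
have -> : K *: 'd f y d = K * 'd f y d by [].
have := S_le d; rewrite d1 mulr1 ler_norml => /andP[_ Sd].
have Klam : K * (lam / 2) = 2 * C0 by rewrite /K; field; exact: lt0r_neq0.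
nra.
Qed.

Theorem mainTheorem2 (R : realType)
  (XX Y : completeNormedModType R) (X : set XX) (f : XX -> Y -> R)
  (Phi : Y -> set XX) (w : Y -> R)
  (hX : X !=set0)
  (hf : {within X `*` [set: Y], continuous (fun z : XX * Y => f z.1 z.2)})
  (hPhi : forall u, Phi u `<=` X)
  (hw : continuous w)
  (hwb : exists B : R, forall u, `|w u| <= B)
  (H1 : reflexive_space Y)
  (H2 : exists (M : Y -> Y -> R) (lam Lam : R),
     (forall y1 y2, 0 <= M y1 y2) /\
     (forall y1 y2, y1 != y2 -> differentiable (fun y => M y y2) y1) /\
     (forall y1 y2, y1 != y2 -> differentiable (fun y => M y1 y) y2) /\
     0 < lam <= 1 /\ 1 <= Lam /\
     (forall y1 y2, lam * `|y1 - y2| <= M y1 y2 <= Lam * `|y1 - y2|) /\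
     (forall y1 y2, y1 != y2 ->
        (lam%:E <= dual_norm ('d (fun y => M y y2) y1 : Y -> R))%E /\
        (dual_norm ('d (fun y => M y y2) y1 : Y -> R) <= Lam%:E)%E /\
        (lam%:E <= dual_norm ('d (fun y => M y1 y) y2 : Y -> R))%E /\
        (dual_norm ('d (fun y => M y1 y) y2 : Y -> R) <= Lam%:E)%E))
  (H3 : forall x u d, X x -> `|d| = 1 -> ddiff_exists f x u d)
  (H4 : exists C0 : R, 0 < C0 /\
     forall u d, `|d| = 1 -> ((- C0)%:E < infD f Phi u d)%E)
  (H5 : forall d : Y, `|d| = 1 -> forall u0 : Y, visc_subsol_at f Phi d w u0) :
  exists L : R, forall y1 y2 : Y, `|w y1 - w y2| <= L * `|y1 - y2|.
Proof.
have [M [lam [Lam [M_ge0 [M_diff [_ [/andP[lam0 _] [Lam1 [M_equiv M_dnorm]]]]]]]]] := H2.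
have gM : gauge M lam Lam.
  by split=> // x v xv; have [? [? _]] := M_dnorm x v xv.
have [C0 [C0_gt0 hinf]] := H4; have [B w_le] := hwb.
have incr := lipschitz_of_superjet_bound gM hw w_le C0_gt0
  (viscosity_superjet_lower hinf H5).
exists (4 * C0 / lam * Lam) => y1 y2; rewrite ler_norml; apply/andP; split.
  by have := incr y1 y2; rewrite distrC; lra.
exact: incr.
Qed.
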